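(* Let $a_2,a_3$ be integers with $1<a_2<a_3$, $A=\{1,a_2,a_3\}$, and let $h$ be a positive integer with $X(h)\ge a_3$. Then $X(h+1)=X(h)+a_3$.
   Context: An integer $x$ has an $h$-representation if $x=c_3a_3+c_2a_2+c_1$ with integers $c_1,c_2,c_3\ge0$ and $c_1+c_2+c_3\le h$. $X(h)$ (the $h$-range) is one less than the smallest positive integer with no $h$-representation. *)

From Stdlib Require Import Arith Lia.

Definition hrep (a2 a3 h x : nat) : Prop :=
  exists c1 c2 c3 : nat, c1 + c2 + c3 <= h /\ x = c3 * a3 + c2 * a2 + c1.

(* is_hrange a2 a3 h r  <->  X(h) = r, i.e. r+1 is the smallest positive
   integer with no h-representation. *)
Definition is_hrange (a2 a3 h r : nat) : Prop :=
  (forall x, 1 <= x <= r -> hrep a2 a3 h x) /\ ~ hrep a2 a3 h (r + 1).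

From Stdlib Require Import Arith Lia ZArith List.
Import ListNotations.

(* If N := X(h) + a3 + 1 had an (h+1)-representation, then N - a3 = X(h) + 1 would have an
   h-representation: this is clear when the representation uses a3, so let N = c2 a2 + c1 with
   c1 + c2 <= h + 1. Write N - k a3 = Q_k a2 + rho_k (division by a2) for 1 <= k <= K := N / a3
   and pick k with rho_k minimal; then N - a3 = (k - 1) a3 + Q_k a2 + rho_k. When rho_k is small
   relative to c1 this representation has at most c1 + c2 - 1 summands. Otherwise
   rho_k >= c1 + q + 1 with q := a3 / a2, and since rho_j is congruent to c1 - j a3 modulo a2,
   the residues rho_j, together with the values rho_j - t (1 <= t <= q) for j > k, are pairwise
   distinct in [rho_k, a2). Counting them bounds the representation by q + a2 - 2 summands, and
   X(h) >= a3 forces h >= q + a2 - 2 because q a2 - 1 is h-representable. *)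


Lemma divide_small_eq0 (a v : Z) : (a | v)%Z -> (Z.abs v < a)%Z -> v = 0%Z.
Proof.
  intros Hdiv Hv. destruct (Z.lt_trichotomy v 0) as [Hneg|[Hz|Hpos]]; [|exact Hz|].
  - apply Z.divide_opp_r in Hdiv. pose proof (Z.divide_pos_le _ (- v) ltac:(lia) Hdiv). lia.
  - pose proof (Z.divide_pos_le _ _ Hpos Hdiv). lia.
Qed.

Lemma NoDup_list_prod {A B : Type} (l : list A) (l' : list B) :
  NoDup l -> NoDup l' -> NoDup (list_prod l l').
Proof.
  intros Hl Hl'. induction Hl as [|x t Hx Ht IH]; simpl; [constructor|].
  apply NoDup_app; [| exact IH |].
  - apply NoDup_map_NoDup_ForallPairs; [|exact Hl'].
    intros a b _ _ E. now inversion E.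
  - intros [u v] Hin Hin'. apply in_map_iff in Hin as [y [E _]]. inversion E; subst.
    apply in_prod_iff in Hin' as [Hx' _]. contradiction.
Qed.

Lemma exists_argmin_range (f : nat -> nat) (K : nat) : 1 <= K ->
  exists k, 1 <= k <= K /\ forall j, 1 <= j <= K -> f k <= f j.
Proof.
  induction K as [|K IH]; intros HK; [lia|].
  destruct (Nat.eq_dec K 0) as [-> | HK0].
  - exists 1. split; [lia|]. intros j Hj. replace j with 1 by lia. lia.
  - destruct (IH ltac:(lia)) as [k [Hk Hmin]].
    destruct (le_lt_dec (f k) (f (S K))) as [Hle | Hlt].
    + exists k. split; [lia|]. intros j Hj.
      destruct (Nat.eq_dec j (S K)) as [-> | Hne]; [lia | apply Hmin; lia].
    + exists (S K). split; [lia|]. intros j Hj.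
      destruct (Nat.eq_dec j (S K)) as [-> | Hne]; [lia|]. specialize (Hmin j ltac:(lia)). lia.
Qed.

Lemma hrep_mono (a2 a3 h h' x : nat) : h <= h' -> hrep a2 a3 h x -> hrep a2 a3 h' x.
Proof. intros Hh [c1 [c2 [c3 [Hc Hx]]]]. exists c1, c2, c3. split; lia. Qed.

Lemma hrep_add_a3 (a2 a3 h x : nat) : hrep a2 a3 h x -> hrep a2 a3 (h + 1) (x + a3).
Proof. intros [c1 [c2 [c3 [Hc Hx]]]]. exists c1, c2, (S c3). split; [lia | simpl; lia]. Qed.

Lemma hrep_succ_cases (a2 a3 h x : nat) : hrep a2 a3 (h + 1) x ->
  (exists c1 c2, c1 + c2 <= h + 1 /\ x = c2 * a2 + c1) \/ (a3 <= x /\ hrep a2 a3 h (x - a3)).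
Proof.
  intros [c1 [c2 [[|c3] [Hc Hx]]]].
  - left. exists c1, c2. split; lia.
  - right. split; [simpl in Hx; lia|]. exists c1, c2, c3. split; [lia | simpl in Hx; lia].
Qed.

Lemma hrep_pred_mul_bound (a2 a3 h q : nat) :
  1 < a2 -> 1 <= q -> q * a2 <= a3 -> hrep a2 a3 h (q * a2 - 1) -> q + a2 - 2 <= h.
Proof.
  intros Ha2 Hq Hqa3 [c1 [c2 [c3 [Hc Hx]]]].
  destruct c3 as [|c3]; [|simpl in Hx; lia].
  assert (Hc2 : c2 < q) by (apply (Nat.mul_lt_mono_pos_r a2); lia).
  assert (0 <= (Z.of_nat q - 1 - Z.of_nat c2) * (Z.of_nat a2 - 1))%Z
    by (apply Z.mul_nonneg_nonneg; lia).
  lia.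
Qed.

Lemma residue_cong (a2 a3 N c1 c2 k : nat) : 0 < a2 -> N = c2 * a2 + c1 -> k * a3 <= N ->
  (Z.of_nat a2 |
   Z.of_nat ((N - k * a3) mod a2) + Z.of_nat k * Z.of_nat (a3 mod a2) - Z.of_nat c1)%Z.
Proof.
  intros Ha2 HN Hk.
  pose proof (Nat.div_mod_eq (N - k * a3) a2).
  pose proof (Nat.div_mod_eq a3 a2).
  exists (Z.of_nat c2 - Z.of_nat ((N - k * a3) / a2) - Z.of_nat k * Z.of_nat (a3 / a2))%Z.
  nia.
Qed.

Section ResidueCount.

(* [rho k] stands for the residue of N - k a3 modulo a2, where N and a3 are congruent to c1 and
   s modulo a2. *)
Variables (a2 s c1 q K ks : nat) (rho : nat -> nat).
Hypothesis s_lt : s < a2.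
Hypothesis ks_range : 1 <= ks <= K.
Hypothesis rho_lt : forall k, 1 <= k <= K -> rho k < a2.
Hypothesis rho_ks_min : forall k, 1 <= k <= K -> rho ks <= rho k.
Hypothesis rho_ks_gap : c1 + q + 1 <= rho ks.
Hypothesis rho_cong : forall k, 1 <= k <= K ->
  (Z.of_nat a2 | Z.of_nat (rho k) + Z.of_nat k * Z.of_nat s - Z.of_nat c1)%Z.

Lemma rho_add_cong i j : 1 <= i -> 1 <= j -> i + j <= K ->
  (Z.of_nat a2 | Z.of_nat (rho (i + j)) - Z.of_nat (rho i) - Z.of_nat (rho j) + Z.of_nat c1)%Z.
Proof.
  intros Hi Hj Hij.
  destruct (rho_cong (i + j) ltac:(lia)) as [x Hx], (rho_cong i ltac:(lia)) as [y Hy],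
    (rho_cong j ltac:(lia)) as [z Hz].
  exists (x - y - z)%Z. rewrite Nat2Z.inj_add in Hx. lia.
Qed.

Lemma rho_wrap_cong i j : 1 <= i -> 1 <= j -> i + j = S K ->
  (Z.of_nat a2 |
   Z.of_nat (rho i) + Z.of_nat (rho j) + Z.of_nat s - Z.of_nat (rho K) - Z.of_nat c1)%Z.
Proof.
  intros Hi Hj Hij.
  destruct (rho_cong i ltac:(lia)) as [x Hx], (rho_cong j ltac:(lia)) as [y Hy],
    (rho_cong K ltac:(lia)) as [z Hz].
  exists (x + y - z)%Z. replace (Z.of_nat K) with (Z.of_nat i + Z.of_nat j - 1)%Z in Hz by lia.
  lia.
Qed.

Lemma rho_shift m : 1 <= m -> m + ks <= K -> rho (m + ks) = rho m + (rho ks - c1).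
Proof.
  intros Hm HmK.
  pose proof (rho_lt m ltac:(lia)). pose proof (rho_lt (m + ks) ltac:(lia)).
  pose proof (rho_ks_min (m + ks) ltac:(lia)).
  pose proof (divide_small_eq0 _ _ (rho_add_cong m ks Hm (proj1 ks_range) HmK) ltac:(lia)).
  lia.
Qed.

Definition admissible (p : nat * nat) :=
  1 <= fst p <= K /\ (snd p = 0 \/ ks < fst p /\ 1 <= snd p <= q).

Definition lowered (p : nat * nat) := rho (fst p) - snd p.

Lemma lowered_range p : admissible p -> rho ks <= lowered p < a2.
Proof.
  destruct p as [k t]; unfold admissible, lowered; simpl. intros [Hk [-> | [Hk' Ht]]].
  - pose proof (rho_lt k Hk). pose proof (rho_ks_min k Hk). lia.
  - pose proof (rho_lt k Hk). pose proof (rho_ks_min (k - ks) ltac:(lia)).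
    pose proof (rho_shift (k - ks) ltac:(lia) ltac:(lia)).
    replace (k - ks + ks) with k in * by lia. lia.
Qed.

Lemma lowered_neq k t k' t' : admissible (k, t) -> admissible (k', t') -> k < k' ->
  lowered (k, t) <> lowered (k', t').
Proof.
  unfold admissible, lowered; simpl. intros [Hk Ht] [Hk' Ht'] Hlt E.
  set (m := k' - k).
  pose proof (rho_add_cong k m ltac:(lia) ltac:(lia) ltac:(lia)) as Hdiv.
  replace (k + m) with k' in Hdiv by lia.
  pose proof (rho_lt k Hk). pose proof (rho_lt k' Hk'). pose proof (rho_lt m ltac:(lia)).
  pose proof (rho_ks_min k Hk). pose proof (rho_ks_min k' Hk').
  pose proof (rho_ks_min m ltac:(lia)).
  destruct (Nat.le_gt_cases t t') as [Htt | Htt].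
  - pose proof (divide_small_eq0 _ _ Hdiv ltac:(lia)). lia.
  - pose proof (rho_shift m ltac:(lia) ltac:(lia)). pose proof (rho_lt (m + ks) ltac:(lia)).
    pose proof (divide_small_eq0 _ _ Hdiv ltac:(lia)). lia.
Qed.

Lemma lowered_inj p p' : admissible p -> admissible p' -> lowered p = lowered p' -> p = p'.
Proof.
  destruct p as [k t], p' as [k' t']. intros Hp Hp' E.
  destruct (lt_eq_lt_dec k k') as [[Hlt | <-] | Hgt].
  - exfalso. exact (lowered_neq k t k' t' Hp Hp' Hlt E).
  - pose proof (lowered_range _ Hp). pose proof (lowered_range _ Hp').
    unfold admissible, lowered in *; simpl in *. f_equal. lia.
  - exfalso. exact (lowered_neq k' t' k t Hp' Hp Hgt (eq_sym E)).
Qed.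

Lemma wrapped_neq_lowered p : rho K < s -> admissible p -> rho K + a2 - s <> lowered p.
Proof.
  destruct p as [k t]; unfold admissible, lowered; simpl. intros HKs [Hk Ht] E.
  set (m := S K - k).
  pose proof (rho_wrap_cong k m ltac:(lia) ltac:(lia) ltac:(lia)) as Hdiv.
  pose proof (rho_lt k Hk). pose proof (rho_lt K ltac:(lia)). pose proof (rho_lt m ltac:(lia)).
  pose proof (rho_ks_min m ltac:(lia)). pose proof (rho_ks_min k Hk).
  pose proof (Z.divide_sub_r _ _ _ Hdiv (Z.divide_refl (Z.of_nat a2))) as Hdiv'.
  destruct Ht as [-> | [Hk' Ht]].
  - pose proof (divide_small_eq0 _ _ Hdiv' ltac:(lia)). lia.
  - pose proof (rho_shift m ltac:(lia) ltac:(lia)). pose proof (rho_lt (m + ks) ltac:(lia)).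
    pose proof (divide_small_eq0 _ _ Hdiv' ltac:(lia)). lia.
Qed.

Definition admissible_pairs :=
  map (fun k => (k, 0)) (seq 1 K) ++ list_prod (seq (S ks) (K - ks)) (seq 1 q).

(* The residue of N - (K + 1) a3 when rho K < s, i.e. when subtracting s wraps around. *)
Definition wrapped := if rho K <? s then [rho K + a2 - s] else [].

Lemma admissible_pairs_spec p : In p admissible_pairs -> admissible p.
Proof.
  unfold admissible_pairs, admissible. intros Hp. apply in_app_or in Hp as [Hp | Hp].
  - apply in_map_iff in Hp as [k [<- Hk]]. apply in_seq in Hk. simpl. lia.
  - destruct p as [k t]. apply in_prod_iff in Hp as [Hk Ht]. apply in_seq in Hk, Ht. simpl. lia.
Qed.

Lemma NoDup_admissible_pairs : NoDup admissible_pairs.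
Proof.
  unfold admissible_pairs. apply NoDup_app.
  - apply NoDup_map_NoDup_ForallPairs; [|apply seq_NoDup].
    intros a b _ _ E. now inversion E.
  - apply NoDup_list_prod; apply seq_NoDup.
  - intros [k t] H1 H2. apply in_map_iff in H1 as [k' [E _]]. inversion E; subst.
    apply in_prod_iff in H2 as [_ H2]. apply in_seq in H2. lia.
Qed.

Lemma NoDup_residue_values : NoDup (map lowered admissible_pairs ++ wrapped).
Proof.
  apply NoDup_app.
  - apply NoDup_map_NoDup_ForallPairs; [|apply NoDup_admissible_pairs].
    intros p p' Hp Hp'. apply lowered_inj; auto using admissible_pairs_spec.
  - unfold wrapped. destruct (rho K <? s); repeat constructor; auto.
  - intros v Hv Hw. unfold wrapped in Hw. destruct (Nat.ltb_spec (rho K) s); [|contradiction].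
    destruct Hw as [<- | []]. apply in_map_iff in Hv as [p [Ev Hp]].
    exact (wrapped_neq_lowered p ltac:(assumption) (admissible_pairs_spec p Hp) (eq_sym Ev)).
Qed.

Lemma residue_values_incl :
  incl (map lowered admissible_pairs ++ wrapped) (seq (rho ks) (a2 - rho ks)).
Proof.
  intros v Hv. apply in_seq. apply in_app_or in Hv as [Hv | Hv].
  - apply in_map_iff in Hv as [p [<- Hp]].
    pose proof (lowered_range p (admissible_pairs_spec p Hp)). lia.
  - unfold wrapped in Hv. destruct (Nat.ltb_spec (rho K) s); [|contradiction].
    destruct Hv as [<- | []].
    pose proof (rho_lt K ltac:(lia)). pose proof (rho_ks_min K ltac:(lia)). lia.
Qed.

Lemma residue_count :
  K + (K - ks) * q + (if rho K <? s then 1 else 0) <= a2 - rho ks.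
Proof.
  replace (K + (K - ks) * q + (if rho K <? s then 1 else 0))
    with (length (map lowered admissible_pairs ++ wrapped)).
  - rewrite <- (length_seq (a2 - rho ks) (rho ks)).
    exact (NoDup_incl_length NoDup_residue_values residue_values_incl).
  - unfold admissible_pairs, wrapped.
    rewrite length_app, length_map, length_app, length_map, length_prod, !length_seq.
    destruct (rho K <? s); simpl; lia.
Qed.

End ResidueCount.

(* The case distinction (a2 - 1) (r - c1) <= ks (a3 - a2) of the next two lemmas is written
   without truncated subtraction. *)
Lemma repr_size_le_coins (a2 a3 N c1 c2 ks Q r : nat) :
  0 < a2 -> N = ks * a3 + a2 * Q + r -> N = c2 * a2 + c1 ->
  a2 * r + ks * a2 + c1 <= a2 * c1 + ks * a3 + r ->
  ks + Q + r <= c1 + c2.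
Proof.
  intros Ha2 E1 E2 Hle. apply (Nat.mul_le_mono_pos_l _ _ a2 Ha2). nia.
Qed.

Lemma residue_gap (a2 a3 q s N c1 c2 ks Q r : nat) :
  a3 = a2 * q + s -> s < a2 -> a2 < a3 -> 1 <= ks ->
  N = ks * a3 + a2 * Q + r -> N = c2 * a2 + c1 ->
  a2 * c1 + ks * a3 + r < a2 * r + ks * a2 + c1 ->
  c1 + q + 1 <= r.
Proof.
  intros Ha3 Hs Ha23 Hks E1 E2 Hlt.
  assert (Hrc : c1 < r) by nia.
  assert (Hq : 1 <= q) by (destruct q; [rewrite Nat.mul_0_r in Ha3; lia | lia]).
  set (W := (Z.of_nat c2 - Z.of_nat Q - Z.of_nat ks * Z.of_nat q)%Z).
  assert (HW : (Z.of_nat r - Z.of_nat c1 + Z.of_nat ks * Z.of_nat s = Z.of_nat a2 * W)%Z)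
    by (subst W; nia).
  assert (HW1 : (1 <= W)%Z) by nia.
  (* With r - c1 + ks s = a2 W, the hypothesis becomes r - c1 > ks (q - 1) + W. *)
  assert (Hd : (Z.of_nat ks * (Z.of_nat q - 1) + W < Z.of_nat r - Z.of_nat c1)%Z) by nia.
  nia.
Qed.

Lemma repr_size_le_of_count (a2 a3 q s K ks Q r A rK : nat) :
  a3 = a2 * q + s -> s < a2 -> 1 <= ks <= K -> r <= rK -> rK < a2 ->
  ks * a3 + a2 * Q + r = K * a3 + a2 * A + rK ->
  a2 * A + rK < a3 ->
  K + (K - ks) * q + (if rK <? s then 1 else 0) <= a2 - r ->
  r + Q + (ks - 1) <= q + a2 - 2.
Proof.
  intros Ha3 Hs [Hks1 Hks] Hr HrK E Hlast Hcount.
  destruct (Nat.le_exists_sub ks K Hks) as [L [-> _]].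
  replace (L + ks - ks) with L in Hcount by lia.
  (* Q - A = (K - ks) q + W with 0 <= W <= K - ks. *)
  remember (Z.of_nat Q - Z.of_nat A - Z.of_nat L * Z.of_nat q)%Z as W eqn:HWdef.
  assert (HW : (Z.of_nat a2 * W = Z.of_nat L * Z.of_nat s + Z.of_nat rK - Z.of_nat r)%Z)
    by (subst W; nia).
  assert (HW0 : (0 <= W)%Z)
    by (apply (Z.mul_nonneg_cancel_l (Z.of_nat a2)); lia).
  assert (HWL : (W < Z.of_nat L + 1)%Z).
  { apply (Z.mul_lt_mono_pos_l (Z.of_nat a2)); [lia|].
    assert (Z.of_nat L * Z.of_nat s <= Z.of_nat L * Z.of_nat a2)%Z by nia. lia. }
  destruct (Nat.ltb_spec rK s).
  - assert (A < q + 1) by (apply (Nat.mul_lt_mono_pos_l a2); lia). lia.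
  - assert (A < q) by (apply (Nat.mul_lt_mono_pos_l a2); lia). lia.
Qed.

Lemma hrep_sub_a3 (a2 a3 N c1 c2 h : nat) :
  1 < a2 -> a2 < a3 -> a3 <= N -> N = c2 * a2 + c1 -> c1 + c2 <= h + 1 ->
  a3 / a2 + a2 - 2 <= h -> hrep a2 a3 h (N - a3).
Proof.
  intros Ha2 Ha23 Ha3N HN Hc Hh.
  set (q := a3 / a2) in *. set (s := a3 mod a2). set (K := N / a3).
  assert (Ha3 : a3 = a2 * q + s) by apply Nat.div_mod_eq.
  assert (Hs : s < a2) by (apply Nat.mod_upper_bound; lia).
  assert (HK : 1 <= K) by (apply Nat.div_str_pos; lia).
  assert (HkN : forall k, k <= K -> k * a3 <= N).
  { intros k Hk. transitivity (a3 * K); [nia | apply Nat.Div0.mul_div_le]. }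
  set (rho k := (N - k * a3) mod a2). set (quo k := (N - k * a3) / a2).
  assert (Hdivmod : forall k, N - k * a3 = a2 * quo k + rho k) by (intros; apply Nat.div_mod_eq).
  assert (Hrho_lt : forall k, rho k < a2) by (intros; apply Nat.mod_upper_bound; lia).
  destruct (exists_argmin_range rho K HK) as [ks [Hks Hmin]].
  pose proof (Hdivmod ks) as Eks. pose proof (HkN ks ltac:(lia)).
  exists (rho ks), (quo ks), (ks - 1). split; [| nia].
  destruct (Nat.le_gt_cases (a2 * rho ks + ks * a2 + c1) (a2 * c1 + ks * a3 + rho ks))
    as [Hle | Hgt].
  - pose proof (repr_size_le_coins a2 a3 N c1 c2 ks (quo ks) (rho ks) ltac:(lia) ltac:(lia) HN Hle).
    lia.
  - pose proof (residue_gap a2 a3 q s N c1 c2 ks (quo ks) (rho ks) Ha3 Hs Ha23 ltac:(lia)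
      ltac:(lia) HN Hgt) as Hgap.
    pose proof (residue_count a2 s c1 q K ks rho Hs Hks (fun k _ => Hrho_lt k)
      Hmin Hgap (fun k Hk => residue_cong a2 a3 N c1 c2 k ltac:(lia) HN (HkN k ltac:(lia))))
      as Hcount.
    pose proof (Hdivmod K) as EK. pose proof (HkN K ltac:(lia)).
    assert (HKlast : N - K * a3 < a3).
    { rewrite Nat.mul_comm. rewrite <- Nat.Div0.mod_eq. apply Nat.mod_upper_bound; lia. }
    pose proof (repr_size_le_of_count a2 a3 q s K ks (quo ks) (rho ks) (quo K) (rho K)
      Ha3 Hs Hks (Hmin K ltac:(lia)) (Hrho_lt K) ltac:(lia) ltac:(lia) Hcount).
    lia.
Qed.

Theorem theorem3 (a2 a3 h r : nat) :
  1 < a2 -> a2 < a3 -> 0 < h ->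
  is_hrange a2 a3 h r -> a3 <= r ->
  is_hrange a2 a3 (h + 1) (r + a3).
Proof.
  intros Ha2 Ha23 _ [Hrep Hnot] Hr.
  assert (Hh : a3 / a2 + a2 - 2 <= h).
  { assert (Hq : 1 <= a3 / a2) by (apply Nat.div_str_pos; lia).
    assert (Hqa3 : a3 / a2 * a2 <= a3) by (rewrite Nat.mul_comm; apply Nat.Div0.mul_div_le).
    apply (hrep_pred_mul_bound a2 a3 h _ Ha2 Hq Hqa3), Hrep. nia. }
  split.
  - intros x Hx. destruct (le_lt_dec x r) as [Hxr | Hxr].
    + apply (hrep_mono a2 a3 h); [lia | apply Hrep; lia].
    + replace x with (x - a3 + a3) by lia. apply hrep_add_a3, Hrep. lia.
  - intros Hsucc. apply Hnot. replace (r + 1) with (r + a3 + 1 - a3) by lia.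
    destruct (hrep_succ_cases a2 a3 h _ Hsucc) as [[c1 [c2 [Hc HN]]] | [_ Hsub]].
    + exact (hrep_sub_a3 a2 a3 (r + a3 + 1) c1 c2 h Ha2 Ha23 ltac:(lia) HN Hc Hh).
    + exact Hsub.
Qed.
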